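(* Let $k\in\mathbb{N}$ and let $G=(g_1,\dots,g_k)\in\mathbb{N}_0^k$ be a telescopic sequence. Then there exists a sequence $G'$ which is both telescopic and minimal and satisfies $\langle G'\rangle=\langle G\rangle$.
   Context: $\mathbb{N}$ denotes the positive integers and $\mathbb{N}_0=\mathbb{N}\cup\{0\}$. For a finite sequence $G=(g_1,\dots,g_k)\in\mathbb{N}_0^k$ (repeats and zeros allowed), $\langle G\rangle$ denotes the set of all $\mathbb{N}_0$-linear combinations of $g_1,\dots,g_k$. $G$ is minimal if $\langle G''\rangle\ne\langle G\rangle$ for every proper subsequence $G''$ of $G$. For $1\le i\le k$ let $G_i=(g_1,\dots,g_i)$ and $d_i=\gcd(G_i)$. A sequence is called admissible if $g_1>0$ when $k=1$ and $g_1+g_2>0$ when $k\ge 2$ (so all $d_i>0$). For admissible $G$, define $c(G)=(c_2,\dots,c_k)$ with $c_j=d_{j-1}/d_j$. An admissible $G$ is telescopic if $c_jg_j\in\langle G_{j-1}\rangle$ for all $2\le j\le k$ (no requirement that $\gcd(G)=1$ or that $G$ be increasing). *)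

(* Sequences G = (g_1,...,g_k) are represented as [seq nat],
   with g_j = nth 0 G j.-1 (1-indexed as in the paper). *)
From mathcomp Require Import all_boot.
Set Implicit Arguments. Unset Strict Implicit. Unset Printing Implicit Defensive.

Definition in_sg (G : seq nat) (x : nat) : Prop :=
  exists c : seq nat, size c = size G /\
    x = \sum_(i < size G) nth 0 c i * nth 0 G i.

Definition same_sg (G1 G2 : seq nat) : Prop := forall x, in_sg G1 x <-> in_sg G2 x.

Definition minimal (G : seq nat) : Prop :=
  forall m : bitseq, size m = size G -> false \in m -> ~ same_sg (mask m G) G.

Definition admissible (G : seq nat) : Prop :=
  (size G = 1 -> 0 < nth 0 G 0) /\ (2 <= size G -> 0 < nth 0 G 0 + nth 0 G 1).

Definition dseq (G : seq nat) (i : nat) : nat := foldr gcdn 0 (take i G).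

Definition cseq (G : seq nat) (j : nat) : nat := dseq G j.-1 %/ dseq G j.

Definition telescopic (G : seq nat) : Prop :=
  admissible G /\
  forall j, 2 <= j <= size G -> in_sg (take j.-1 G) (cseq G j * nth 0 G j.-1).

(* Let H be telescopic and irredundant (no repeats,
   no entry generated by the others) with <H> = <G>, let D = gcd H, append g,
   and let c = D / gcd(D, g), so that c g lies in <H> by telescopicity.  If g
   lies in <H>, keep H.  Otherwise note that an entry x of an irredundant H is
   an atom of <H>; if x = b + n g with b generated by the other entries, then
   D | n g forces c | n, and atomicity forces x = c g.  Hence appending g keeps
   the sequence irredundant, unless c g is itself an entry, in which case
   replacing c g by g does; the replacement keeps the sequence telescopic since
   it divides every later d_j by c.  Finally irredundant sequences are minimal. *)

From mathcomp Require Import all_boot zify.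
From Stdlib Require Import Classical_Prop.

Set Implicit Arguments. Unset Strict Implicit.

Local Notation gcds := (foldr gcdn 0).

Lemma in_sg_nil x : in_sg [::] x <-> x = 0.
Proof. by split=> [[c [_ ->]]|->]; [rewrite big_ord0 | exists [::]; rewrite big_ord0]. Qed.

Lemma in_sg_cons a L x :
  in_sg (a :: L) x <-> exists n y, x = n * a + y /\ in_sg L y.
Proof.
split=> [[c [sc ->]]|[n [y [-> [c [sc ->]]]]]]; last first.
  by exists (n :: c); split; [rewrite /= sc | rewrite big_ord_recl].
rewrite big_ord_recl /=.
exists (nth 0 c 0), (\sum_(i < size L) nth 0 c (bump 0 i) * nth 0 L i); split=> //.
exists (behead c); split; first by rewrite size_behead sc.
by apply: eq_bigr => i _; rewrite nth_behead.
Qed.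

Lemma in_sg0 L : in_sg L 0.
Proof. by elim: L => [|a L IH]; [apply/in_sg_nil | apply/in_sg_cons; exists 0, 0]. Qed.

Lemma in_sgD L x y : in_sg L x -> in_sg L y -> in_sg L (x + y).
Proof.
elim: L x y => [|a L IH] x y.
  by move=> /in_sg_nil -> /in_sg_nil ->; apply/in_sg_nil.
move=> /in_sg_cons [n [x' [-> hx]]] /in_sg_cons [m [y' [-> hy]]].
by apply/in_sg_cons; exists (n + m), (x' + y'); split; [lia | exact: IH].
Qed.

Lemma in_sgMn L n x : in_sg L x -> in_sg L (n * x).
Proof. by move=> hx; elim: n => [|n IH]; [exact: in_sg0 | rewrite mulSn; exact: in_sgD]. Qed.

Lemma mem_in_sg L a : a \in L -> in_sg L a.
Proof.
elim: L => [|b L IH] //; rewrite in_cons => /predU1P [->|/IH aL]; apply/in_sg_cons.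
  by exists 1, 0; split; [lia | exact: in_sg0].
by exists 0, a.
Qed.

Lemma in_sg_trans L1 L2 : (forall a, a \in L1 -> in_sg L2 a) ->
  forall x, in_sg L1 x -> in_sg L2 x.
Proof.
elim: L1 => [|a L IH] sub x; first by move/in_sg_nil ->; exact: in_sg0.
case/in_sg_cons => n [y [-> hy]]; apply: in_sgD.
  by apply/in_sgMn/sub; rewrite mem_head.
by apply: IH hy => b bL; apply: sub; rewrite in_cons bL orbT.
Qed.

Lemma sub_in_sg L1 L2 x : {subset L1 <= L2} -> in_sg L1 x -> in_sg L2 x.
Proof. by move=> sub12; apply: in_sg_trans => a /sub12 /mem_in_sg. Qed.

Lemma in_sg_dvdn d L x : (forall a, a \in L -> d %| a) -> in_sg L x -> d %| x.
Proof.
elim: L x => [|a L IH] x dvdL; first by move/in_sg_nil ->.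
case/in_sg_cons => n [y [-> hy]]; apply: dvdn_add.
  by apply/dvdn_mull/dvdL; rewrite mem_head.
by apply: IH hy => b bL; apply: dvdL; rewrite in_cons bL orbT.
Qed.

Lemma in_sg_split_mem L x y : x \in L -> in_sg L y ->
  exists n z, y = n * x + z /\ in_sg [seq a <- L | a != x] z.
Proof.
move=> xL yL; apply/in_sg_cons; apply: sub_in_sg yL => a aL.
by rewrite in_cons mem_filter aL andbT orbN.
Qed.

Lemma in_sg_cat_cons_mul P T c g x :
  in_sg (P ++ c * g :: T) x -> in_sg (P ++ g :: T) x.
Proof.
apply: in_sg_trans => a; rewrite mem_cat in_cons => /or3P [aP | /eqP -> | aT].
- by apply: mem_in_sg; rewrite mem_cat aP.
- by apply/in_sgMn/mem_in_sg; rewrite mem_cat mem_head orbT.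
- by apply: mem_in_sg; rewrite mem_cat in_cons aT !orbT.
Qed.

Lemma same_sgP L1 L2 : (forall a, a \in L1 -> in_sg L2 a) ->
  (forall a, a \in L2 -> in_sg L1 a) -> same_sg L1 L2.
Proof. by move=> sub12 sub21 x; split; apply: in_sg_trans. Qed.

Lemma same_sg_trans L1 L2 L3 : same_sg L1 L2 -> same_sg L2 L3 -> same_sg L1 L3.
Proof. by move=> same12 same23 x; apply: iff_trans (same12 x) (same23 x). Qed.

Lemma same_sg_rcons H G g : same_sg H G -> same_sg (rcons H g) (rcons G g).
Proof.
move=> sameHG; apply: same_sgP => a; rewrite mem_rcons in_cons => /predU1P [-> | aL].
- by apply: mem_in_sg; rewrite mem_rcons mem_head.
- by apply: sub_in_sg ((sameHG a).1 (mem_in_sg aL)) => b; rewrite mem_rcons in_cons orbC => ->.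
- by apply: mem_in_sg; rewrite mem_rcons mem_head.
- by apply: sub_in_sg ((sameHG a).2 (mem_in_sg aL)) => b; rewrite mem_rcons in_cons orbC => ->.
Qed.

Lemma dvdn_gcds d L : (d %| gcds L) = all (fun a => d %| a) L.
Proof. by elim: L => [|a L IH] //=; rewrite ?dvdn0 // dvdn_gcd IH. Qed.

Lemma gcds_dvdn L a : a \in L -> gcds L %| a.
Proof. by move: (dvdnn (gcds L)); rewrite dvdn_gcds => /allP; apply. Qed.

Lemma gcds_dvdn_in_sg L x : in_sg L x -> gcds L %| x.
Proof. exact/in_sg_dvdn/gcds_dvdn. Qed.

Lemma gcds_cat P Q : gcds (P ++ Q) = gcdn (gcds P) (gcds Q).
Proof. by elim: P => [|a P IH] /=; rewrite ?gcd0n // IH gcdnA. Qed.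

Lemma gcds_gt0 L : (0 < gcds L) = has (fun a => 0 < a) L.
Proof. by elim: L => [|a L IH] //=; rewrite gcdn_gt0 IH. Qed.

Lemma same_sg_gcds L1 L2 : same_sg L1 L2 -> gcds L1 = gcds L2.
Proof.
move=> same12; apply/eqP; rewrite eqn_dvd !dvdn_gcds.
by apply/andP; split; apply/allP => a /mem_in_sg /same12 /gcds_dvdn_in_sg.
Qed.

Section Cofactor.

Variables D g c : nat.
Hypotheses (D_gt0 : 0 < D) (cofactorE : c * gcdn D g = D).

Let gcd_gt0 : 0 < gcdn D g. Proof. by rewrite gcdn_gt0 D_gt0. Qed.

Lemma coprime_cofactor : coprime c (g %/ gcdn D g).
Proof.
rewrite /coprime -(eqn_pmul2r gcd_gt0) mul1n muln_gcdl cofactorE.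
by rewrite divnK ?dvdn_gcdr.
Qed.

Lemma dvdn_cofactor n : D %| n * g -> c %| n.
Proof.
rewrite -{1}cofactorE -[in n * g](divnK (dvdn_gcdr D g)) mulnA dvdn_pmul2r //.
by rewrite Gauss_dvdl // coprime_cofactor.
Qed.

Lemma cofactor_gcdn X : D %| X -> X %| c * g -> c * gcdn X g = X.
Proof.
move=> /dvdnP [s XE] Xcg; apply/eqP; rewrite eqn_dvd; apply/andP; split; last first.
  by rewrite muln_gcdr dvdn_gcd dvdn_mull.
have gE : g = g %/ gcdn D g * gcdn D g by rewrite divnK ?dvdn_gcdr.
move: coprime_cofactor gE; set t := gcdn D g; set g' := g %/ t => co gE.
rewrite XE -cofactorE -/t gE mulnA -muln_gcdl gcdnC Gauss_gcdl 1?coprime_sym //.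
by rewrite mulnA (mulnC c) dvdn_pmul2r ?dvdn_mul ?dvdn_gcdr.
Qed.

End Cofactor.

Definition irredundant (L : seq nat) : Prop :=
  uniq L /\ forall x, x \in L -> ~ in_sg [seq y <- L | y != x] x.

Lemma irredundant_minimal L : irredundant L -> minimal L.
Proof.
case=> uL irrL m sm false_m same.
set p := index false m; set x := nth 0 L p.
have xL : x \in L by rewrite mem_nth // -sm index_mem.
have x_notin : x \notin mask m L.
  by rewrite in_mask // index_uniq -?sm ?index_mem // nth_index ?andbF.
apply: (irrL x xL); apply: sub_in_sg (proj2 (same x) (mem_in_sg xL)) => a a_m.
rewrite mem_filter (mem_mask a_m) andbT.
by apply: contraNneq x_notin => <-.
Qed.

Lemma irredundant_atom L x u v : irredundant L -> x \in L -> x = u + v ->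
  in_sg L u -> in_sg L v -> u = 0 \/ v = 0.
Proof.
move=> [_ irrL] xL xE /(in_sg_split_mem xL) [a [u' [uE u'S]]].
case/(in_sg_split_mem xL) => b [v' [vE v'S]].
case: a uE => [|a] uE; last by right; lia.
case: b vE => [|b] vE; last by left; lia.
exfalso; apply: (irrL x xL).
by rewrite [X in in_sg _ X]xE uE vE !mul0n !add0n; exact: in_sgD.
Qed.

Lemma irredundant_exchange H g c x : irredundant H -> 0 < gcds H ->
  c * gcdn (gcds H) g = gcds H -> in_sg H (c * g) -> x \in H ->
  in_sg (g :: [seq y <- H | y != x]) x -> x = c * g.
Proof.
move=> irrH D_gt0 cE cgH xH /in_sg_cons [n [b [xE bS]]].
have bH : in_sg H b by apply: sub_in_sg bS => a; rewrite mem_filter => /andP [].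
have ng_gt0 : 0 < n * g.
  rewrite lt0n; apply/negP => /eqP ng0; apply: (irrH.2 x xH).
  by rewrite [X in in_sg _ X]xE ng0 add0n.
have : gcds H %| n * g by rewrite -(dvdn_addl _ (gcds_dvdn_in_sg bH)) -xE gcds_dvdn.
case/(dvdn_cofactor D_gt0 cE)/dvdnP => [[|q] nE]; first by rewrite nE in ng_gt0.
have xE' : x = (q * (c * g) + b) + c * g by rewrite xE nE; lia.
have [qb0|cg0] := irredundant_atom irrH xH xE' (in_sgD (in_sgMn _ cgH) bH) cgH.
  by rewrite xE' qb0.
by rewrite nE -mulnA cg0 muln0 in ng_gt0.
Qed.

Lemma irredundant_extend H H' g c : irredundant H -> 0 < gcds H ->
  c * gcdn (gcds H) g = gcds H -> in_sg H (c * g) -> ~ in_sg H g ->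
  uniq H' -> {subset H' <= g :: H} -> c * g \notin H' -> irredundant H'.
Proof.
move=> irrH D_gt0 cE cgH gH uH' subH' cgH'; split=> // x xH'.
have [-> | xg] := eqVneq x g.
  apply: contra_not gH; apply: sub_in_sg => a; rewrite mem_filter.
  by case/andP => ag /subH'; rewrite in_cons (negbTE ag).
have xH : x \in H by move: (subH' x xH'); rewrite in_cons (negbTE xg).
move=> xS; move: cgH'; rewrite -(irredundant_exchange irrH D_gt0 cE cgH xH) ?xH' //.
apply: sub_in_sg xS => a; rewrite mem_filter => /andP [ax /subH'].
by rewrite !in_cons mem_filter ax => /orP [-> | ->]; rewrite ?orbT.
Qed.

(* [telescoping_at L i] is the condition c_j g_j \in <G_(j-1)> for j = i + 1:
   sequences are indexed from 0 here. *)
Definition telescoping_at (L : seq nat) i : Prop :=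
  in_sg (take i L) (cseq L i.+1 * nth 0 L i).

Definition telescoping (L : seq nat) : Prop :=
  forall i, 0 < i < size L -> telescoping_at L i.

Lemma telescopicE L : telescopic L <-> admissible L /\ telescoping L.
Proof.
split=> -[adm tL]; split=> //.
  by move=> i /andP [i_gt0 i_lt]; apply: (tL i.+1); rewrite ltnS i_gt0.
by move=> [|[|j]] // /andP [_ j_lt]; apply: tL.
Qed.

Lemma notin0_admissible L : 0 \notin L -> admissible L.
Proof.
move=> L0; have pos i : i < size L -> 0 < nth 0 L i.
  by move=> i_lt; rewrite lt0n; apply: contraNneq L0 => <-; exact: mem_nth.
by split=> [L1 | L2]; rewrite ?addn_gt0 pos // ?L1 // (leq_trans _ L2).
Qed.

Lemma admissible_gcds_gt0 L : admissible L -> 0 < size L -> 0 < gcds L.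
Proof.
case: L => [|a [|b L]] // [adm1 adm2] _; rewrite gcds_gt0 /=.
  by rewrite adm1.
by move: (adm2 isT); rewrite addn_gt0 => /orP [-> | ->]; rewrite ?orbT.
Qed.

Lemma take_cat_cons P (x : nat) R l :
  take (size P + l.+1) (P ++ x :: R) = P ++ x :: take l R.
Proof. by rewrite take_cat ltnNge leq_addr /= addKn. Qed.

Lemma telescoping_at_cat P Q i : i < size P ->
  telescoping_at (P ++ Q) i <-> telescoping_at P i.
Proof.
by move=> i_lt; rewrite /telescoping_at /cseq /dseq !takel_cat ?nth_cat ?i_lt // ltnW.
Qed.

Lemma telescoping_at_size P x R :
  telescoping_at (P ++ x :: R) (size P) <-> in_sg P (gcds P %/ gcdn (gcds P) x * x).
Proof.
rewrite /telescoping_at /cseq /dseq take_size_cat // nth_cat ltnn subnn /=.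
by rewrite -addn1 take_cat_cons take0 gcds_cat /= gcdn0.
Qed.

Lemma telescoping_at_cat_cons P x R l :
  telescoping_at (P ++ x :: R) (size P + l.+1) <->
  in_sg (P ++ x :: take l R)
    (gcds (P ++ x :: take l R) %/ gcds (P ++ x :: take l.+1 R) * nth 0 R l).
Proof.
by rewrite /telescoping_at /cseq /dseq /= -addnS !take_cat_cons nth_cat ltnNge leq_addr /= addKn.
Qed.

Lemma telescoping_rcons H g : telescoping (rcons H g) <->
  telescoping H /\ (0 < size H -> in_sg H (gcds H %/ gcdn (gcds H) g * g)).
Proof.
rewrite -cats1 /telescoping size_cat addn1; split=> [tHg | [tH last] i].
  split=> [i /andP [i_gt0 i_lt] | H_gt0].
    by apply/(telescoping_at_cat _ i_lt)/tHg; rewrite i_gt0 ltnW.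
  by apply/telescoping_at_size/tHg; rewrite H_gt0 /=.
case/andP=> i_gt0; rewrite ltnS leq_eqVlt => /predU1P [i_eq | i_lt].
  by rewrite i_eq in i_gt0 *; apply/telescoping_at_size/last.
by apply/telescoping_at_cat => //; apply: tH; rewrite i_gt0.
Qed.

Section ScaleDown.

Variables (P R : seq nat) (g c : nat).
Let D := gcds (P ++ c * g :: R).
Hypotheses (D_gt0 : 0 < D) (cofactorE : c * gcdn D g = D).

Lemma gcds_cat_cons_scale T : {subset T <= R} ->
  gcds (P ++ c * g :: T) = c * gcds (P ++ g :: T).
Proof.
move=> TR; have -> : gcds (P ++ g :: T) = gcdn (gcds (P ++ c * g :: T)) g.
  by rewrite !gcds_cat /= -gcdnA gcdnAC (gcdnC (c * g)) gcdnMl.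
symmetry; apply: (cofactor_gcdn D_gt0 cofactorE); last first.
  by rewrite gcds_dvdn // mem_cat mem_head orbT.
rewrite dvdn_gcds; apply/allP => a aT; apply: gcds_dvdn.
by rewrite !mem_cat !in_cons in aT *; case/or3P: aT => [->|->|/TR ->]; rewrite ?orbT.
Qed.

Lemma telescoping_scale_down : 0 < g ->
  telescoping (P ++ c * g :: R) -> telescoping (P ++ g :: R).
Proof.
move=> g_gt0 tL i /andP [i_gt0 i_lt].
have c_gt0 : 0 < c by move: D_gt0; rewrite -cofactorE muln_gt0 => /andP [].
have scaleE l : gcds (P ++ c * g :: take l R) = c * gcds (P ++ g :: take l R).
  by apply: gcds_cat_cons_scale => a /mem_take.
have /tL tLi : 0 < i < size (P ++ c * g :: R) by rewrite i_gt0 !size_cat in i_lt *.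
case: (ltngtP i (size P)) => [i_lt_P | i_gt_P | i_eq].
- by apply/(telescoping_at_cat _ i_lt_P); move/(telescoping_at_cat _ i_lt_P): tLi.
- have [l iE] : exists l, i = size P + l.+1 by exists (i - size P).-1; lia.
  move: tLi; rewrite iE !telescoping_at_cat_cons !scaleE divnMl //.
  exact: in_sg_cat_cons_mul.
move: tLi; rewrite i_eq !telescoping_at_size.
have := scaleE 0; rewrite take0 !gcds_cat /= !gcdn0 => gcdE.
have := dvdn_gcdl (gcds P) (c * g); rewrite {}gcdE.
set E := gcds P; set Y := gcdn E g => /dvdnP [q ->].
have Y_gt0 : 0 < Y by rewrite gcdn_gt0 g_gt0 orbT.
by rewrite mulnK ?muln_gt0 ?c_gt0 // !mulnA mulnK.
Qed.

End ScaleDown.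

Section ExtensionStep.

Variables (H : seq nat) (g : nat).
Let c := gcds H %/ gcdn (gcds H) g.
Hypotheses (tH : telescoping H) (irrH : irredundant H) (D_gt0 : 0 < gcds H).
Hypotheses (cgH : in_sg H (c * g)) (gNH : ~ in_sg H g).

Let cE : c * gcdn (gcds H) g = gcds H. Proof. by rewrite divnK ?dvdn_gcdl. Qed.

Let g_gt0 : 0 < g.
Proof. by rewrite lt0n; apply/eqP => g0; apply: gNH; rewrite g0; exact: in_sg0. Qed.

Let g_notin : g \notin H. Proof. by apply/negP => /mem_in_sg. Qed.

Let cg_neq : c * g != g. Proof. by apply/eqP => cgg; apply: gNH; rewrite -cgg. Qed.

Lemma extension_step :
  exists H', [/\ telescoping H', irredundant H' & same_sg H' (rcons H g)].
Proof.
have irr := irredundant_extend irrH D_gt0 cE cgH gNH.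
have [cg_in | cg_notin] := boolP (c * g \in H); last first.
  exists (rcons H g); split; last exact: same_sg_rcons.
  - by apply/telescoping_rcons; split.
  - apply: irr; first by rewrite rcons_uniq g_notin irrH.1.
      by move=> a; rewrite mem_rcons.
    by rewrite mem_rcons in_cons negb_or cg_neq.
set i := index (c * g) H; set P := take i H; set R := drop i.+1 H.
have HE : H = P ++ c * g :: R.
  by rewrite -[in RHS](nth_index 0 cg_in) -drop_nth ?index_mem // cat_take_drop.
have uH := irrH.1; rewrite HE -cat1s uniq_catCA cat1s cons_uniq in uH.
case/andP: uH => cg_PR uPR.
exists (P ++ g :: R); split.
- by apply: (telescoping_scale_down (c := c)); rewrite -?HE.
- apply: irr.
  + rewrite -cat1s uniq_catCA cat1s cons_uniq uPR andbT.
    by apply: contra g_notin; rewrite HE !mem_cat in_cons => /orP [-> | ->]; rewrite ?orbT.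
  + by move=> a; rewrite in_cons HE !mem_cat !in_cons => /or3P [-> | -> | ->]; rewrite ?orbT.
  + by rewrite mem_cat in_cons (negbTE cg_neq) /= -mem_cat.
apply: same_sgP => a.
  rewrite mem_cat in_cons => aL; apply: mem_in_sg; rewrite mem_rcons in_cons HE mem_cat in_cons.
  by case/or3P: aL => [-> | -> | ->]; rewrite ?orbT.
rewrite mem_rcons in_cons => /predU1P [-> | aH].
  by apply: mem_in_sg; rewrite mem_cat mem_head orbT.
by apply: (in_sg_cat_cons_mul (c := c)); rewrite -HE; exact: mem_in_sg.
Qed.

End ExtensionStep.

Lemma telescoping_irredundant_hull G : 0 < gcds G -> telescoping G ->
  exists H, [/\ telescoping H, irredundant H & same_sg H G].
Proof.
elim/last_ind: G => [// | G g IH]; rewrite -cats1 gcds_cat /= gcdn0 cats1 => Gg_gt0.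
case/telescoping_rcons => tG tlast.
have [G0 | D_gt0] := posnP (gcds G).
  rewrite G0 gcd0n in Gg_gt0; exists [:: g]; split.
  - by move=> [|i] /andP [].
  - split=> // x; rewrite inE => /eqP -> /=; rewrite eqxx => /in_sg_nil g0.
    by rewrite g0 in Gg_gt0.
  - apply: same_sgP => a.
      by rewrite inE => /eqP ->; apply: mem_in_sg; rewrite mem_rcons mem_head.
    rewrite mem_rcons in_cons => /predU1P [-> | aG]; first by apply: mem_in_sg; rewrite mem_head.
    by have := gcds_dvdn aG; rewrite G0 dvd0n => /eqP ->; exact: in_sg0.
have [H [tH irrH sameHG]] := IH D_gt0 tG.
have DE := same_sg_gcds sameHG.
have cgH : in_sg H (gcds H %/ gcdn (gcds H) g * g).
  by apply/sameHG; rewrite DE; apply: tlast; case: (G) D_gt0.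
rewrite -DE in D_gt0.
have [gH | gNH] := classic (in_sg H g).
  exists H; split=> //; apply: same_sg_trans (same_sg_rcons g sameHG).
  apply: same_sgP => a; first by move=> aH; apply: mem_in_sg; rewrite mem_rcons in_cons aH orbT.
  by rewrite mem_rcons in_cons => /predU1P [-> | /mem_in_sg].
have [H' [tH' irrH' sameH']] := extension_step tH irrH D_gt0 cgH gNH.
by exists H'; split=> //; apply: same_sg_trans sameH' (same_sg_rcons g sameHG).
Qed.

Unset Implicit Arguments.

Theorem mainTheorem1 (G : seq nat) (hk : 1 <= size G) (hG : telescopic G) :
  exists G' : seq nat, telescopic G' /\ minimal G' /\ same_sg G' G.
Proof.
have [admG tG] := (telescopicE G).1 hG.
have [H [tH irrH sameHG]] := telescoping_irredundant_hull (admissible_gcds_gt0 admG hk) tG.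
exists H; split; last by split; [exact: irredundant_minimal | exact: sameHG].
apply/telescopicE; split=> //; apply: notin0_admissible.
by apply/negP => H0; apply: irrH.2 H0 _; exact: in_sg0.
Qed.
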